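(* Let $G$ be a simple graph with $V(G)=V_1\cup V_2$, $V_1\cap V_2=\{v_0\}$, and $E(G)=E(G[V_1])\cup E(G[V_2])$. If $f_i\in\mathrm{SEDF}^0(G[V_i])$ for $i=1,2$, then the function $f=f_1*f_2:E(G)\to\{1,-1\}$, defined by $f(e)=f_i(e)$ for $e\in E(G[V_i])$, belongs to $\mathrm{SEDF}^0(G)$ and $f(G)=f_1(G[V_1])+f_2(G[V_2])$.
   Context: $G[S]$ denotes the subgraph induced by $S$. For a graph $H$ and $f:E(H)\to\{1,-1\}$, $f(H)=\sum_{e\in E(H)}f(e)$ and $f(v)=\sum_{e\in E_H(v)}f(e)$, where $E_H(v)$ is the set of edges of $H$ incident with $v$. $\mathrm{SEDF}^0(H)$ is the set of functions $f:E(H)\to\{1,-1\}$ such that (a) $f(v)\ge 0$ for all $v\in V(H)$, and (b) $f(u)+f(v)\ge 2$ for every edge $uv$ with $f(uv)=1$. *)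

(* A simple graph on a finite vertex type T is given by a
   symmetric irreflexive relation adj : rel T.  Edges are represented as
   2-element vertex sets [set x; y]. *)
From mathcomp Require Import all_boot all_order all_algebra.
Set Implicit Arguments. Unset Strict Implicit. Unset Printing Implicit Defensive.
Import Order.TTheory GRing.Theory Num.Theory.
Local Open Scope ring_scope.

Section Defs.
Variable T : finType.
Variable adj : rel T.

Definition iedges (S : {set T}) : {set {set T}} :=
  [set [set x; y] | x in S, y in S & adj x y].

Definition fsum (S : {set T}) (f : {set T} -> int) : int :=
  \sum_(ed in iedges S) f ed.

Definition fvert (S : {set T}) (f : {set T} -> int) (v : T) : int :=
  \sum_(ed in iedges S | v \in ed) f ed.

(* f in SEDF^0(G[S]) (values of f off E(G[S]) are irrelevant) *)
Definition SEDF0 (S : {set T}) (f : {set T} -> int) : Prop :=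
  [/\ (forall ed, ed \in iedges S -> f ed = 1 \/ f ed = -1),
      (forall v, v \in S -> 0 <= fvert S f v) &
      (forall x y, x \in S -> y \in S -> adj x y -> f [set x; y] = 1 ->
          2 <= fvert S f x + fvert S f y)].

Definition fglue (V1 : {set T}) (f1 f2 : {set T} -> int) : {set T} -> int :=
  fun ed => if ed \in iedges V1 then f1 ed else f2 ed.
End Defs.

(* Since the two parts share only the vertex v0 and the graph has no loops,
   no edge lies in both E(G[V1]) and E(G[V2]).  Hence every sum over the
   edges of G splits into a sum over E(G[V1]) plus a sum over E(G[V2]):
   f(G) = f1(G[V1]) + f2(G[V2]) and f(v) = f1(v) + f2(v), where f_i(v) = 0
   for v outside V_i.  Both conditions of SEDF^0 are then inherited, since
   adding a nonnegative f_j(v) can only increase the left-hand sides. *)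
From mathcomp Require Import all_boot all_order all_algebra.
Set Implicit Arguments. Unset Strict Implicit. Unset Printing Implicit Defensive.
Import Order.TTheory GRing.Theory Num.Theory.
Local Open Scope ring_scope.

Section InducedEdges.
Variables (T : finType) (adj : rel T).

Lemma iedges_subset (S : {set T}) ed : ed \in iedges adj S -> ed \subset S.
Proof.
case/imset2P=> x y xS; rewrite inE => /andP[yS _] ->.
by apply/subsetP=> z; rewrite !inE => /orP[] /eqP->.
Qed.

Lemma mem_iedges2 (S : {set T}) x y :
  [set x; y] \in iedges adj S -> (x \in S) && (y \in S).
Proof. by move/iedges_subset/subsetP=> sS; rewrite !sS // !inE eqxx ?orbT. Qed.

Lemma set2_in_iedges (S : {set T}) x y :
  x \in S -> y \in S -> adj x y -> [set x; y] \in iedges adj S.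
Proof. by move=> xS yS axy; apply/imset2P; exists x y; rewrite ?inE ?yS. Qed.

Lemma fvert_notin (S : {set T}) f v : v \notin S -> fvert adj S f v = 0.
Proof.
move=> vNS; rewrite /fvert big1 // => ed /andP[/iedges_subset/subsetP sS ved].
by rewrite sS in vNS.
Qed.

Lemma SEDF0_fvert_ge0 (S : {set T}) f v : SEDF0 adj S f -> 0 <= fvert adj S f v.
Proof.
case=> _ fv_ge0 _; have [/fv_ge0 // | vNS] := boolP (v \in S).
by rewrite fvert_notin.
Qed.

Lemma disjoint_iedges (V1 V2 : {set T}) v0 :
  irreflexive adj -> V1 :&: V2 \subset [set v0] ->
  [disjoint iedges adj V1 & iedges adj V2].
Proof.
move=> adj_irr /subsetP sI; rewrite -setI_eq0; apply/eqP/setP=> ed.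
rewrite !inE; apply/negP=> /andP[e1 e2].
case/imset2P: (e1) => x y _; rewrite inE => /andP[_ axy] ed_xy.
rewrite {}ed_xy in e1 e2.
case/andP: (mem_iedges2 e1) => xV1 yV1; case/andP: (mem_iedges2 e2) => xV2 yV2.
have /set1P x_v0 : x \in [set v0] by rewrite sI // inE xV1.
have /set1P y_v0 : y \in [set v0] by rewrite sI // inE yV1.
by rewrite x_v0 y_v0 adj_irr in axy.
Qed.

End InducedEdges.

Section Glue.
Variables (T : finType) (adj : rel T) (S V1 V2 : {set T}).
Hypothesis iedges12 : [disjoint iedges adj V1 & iedges adj V2].
Hypothesis iedgesS : iedges adj S = iedges adj V1 :|: iedges adj V2.
Variables f1 f2 : {set T} -> int.

Let f := fglue adj V1 f1 f2.

Lemma fglue_l ed : ed \in iedges adj V1 -> f ed = f1 ed.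
Proof. by rewrite /f /fglue => ->. Qed.

Lemma fglue_r ed : ed \in iedges adj V2 -> f ed = f2 ed.
Proof.
move=> e2; rewrite /f /fglue; case: ifPn => // e1.
by rewrite (disjointFr iedges12 e1) in e2.
Qed.

Lemma big_iedges_split (F : {set T} -> int) :
  \sum_(ed in iedges adj S) F ed =
  \sum_(ed in iedges adj V1) F ed + \sum_(ed in iedges adj V2) F ed.
Proof.
by rewrite iedgesS -bigU //; apply: eq_bigl => ed; rewrite inE.
Qed.

Lemma fsum_fglue : fsum adj S f = fsum adj V1 f1 + fsum adj V2 f2.
Proof.
rewrite /fsum big_iedges_split.
by congr (_ + _); apply: eq_bigr => ed; [move/fglue_l | move/fglue_r].
Qed.

Lemma fvert_fglue v : fvert adj S f v = fvert adj V1 f1 v + fvert adj V2 f2 v.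
Proof.
rewrite /fvert big_mkcondr big_iedges_split -!big_mkcondr.
by congr (_ + _); apply: eq_bigr => ed /andP[]; [move/fglue_l | move/fglue_r].
Qed.

Lemma SEDF0_fglue : SEDF0 adj V1 f1 -> SEDF0 adj V2 f2 -> SEDF0 adj S f.
Proof.
move=> hf1 hf2; case: (hf1) => sign1 _ edge1; case: (hf2) => sign2 _ edge2.
have fv_ge0 v : 0 <= fvert adj V1 f1 v /\ 0 <= fvert adj V2 f2 v.
  by split; apply: SEDF0_fvert_ge0.
split.
- move=> ed; rewrite iedgesS inE => /orP[e1 | e2].
  + by rewrite fglue_l //; apply: sign1.
  + by rewrite fglue_r //; apply: sign2.
- by move=> v _; rewrite fvert_fglue; case: (fv_ge0 v) => ? ?; rewrite addr_ge0.
move=> x y xS yS axy; rewrite !fvert_fglue addrACA.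
case: (fv_ge0 x) (fv_ge0 y) => [x1 x2] [y1 y2].
move: (set2_in_iedges xS yS axy); rewrite iedgesS inE => /orP[e1 | e2].
- case/andP: (mem_iedges2 e1) => xV1 yV1; rewrite fglue_l // => /edge1 ge2.
  by apply: le_trans (ge2 xV1 yV1 axy) _; rewrite lerDl addr_ge0.
- case/andP: (mem_iedges2 e2) => xV2 yV2; rewrite fglue_r // => /edge2 ge2.
  by apply: le_trans (ge2 xV2 yV2 axy) _; rewrite lerDr addr_ge0.
Qed.

End Glue.

Theorem lemma2p2 (T : finType) (adj : rel T)
  (adj_sym : symmetric adj) (adj_irr : irreflexive adj)
  (V1 V2 : {set T}) (v0 : T)
  (hV : V1 :|: V2 = [set: T]) (hI : V1 :&: V2 = [set v0])
  (hE : iedges adj [set: T] = iedges adj V1 :|: iedges adj V2)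
  (f1 f2 : {set T} -> int)
  (hf1 : SEDF0 adj V1 f1) (hf2 : SEDF0 adj V2 f2) :
  SEDF0 adj [set: T] (fglue adj V1 f1 f2) /\
  fsum adj [set: T] (fglue adj V1 f1 f2) = fsum adj V1 f1 + fsum adj V2 f2.
Proof.
have iedges12 : [disjoint iedges adj V1 & iedges adj V2].
  by apply: (disjoint_iedges (v0 := v0)); rewrite ?hI.
by split; [exact: (SEDF0_fglue iedges12 hE) | exact: (fsum_fglue iedges12 hE)].
Qed.
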